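(* Let $k\ge 3$ be an integer, let $\mathcal H$ be a Hilbert space over $\mathbb K\in\{\mathbb R,\mathbb C\}$, and let $\mathbf{x}_1,\ldots,\mathbf{x}_k\in\mathcal H$ be norm one vectors. There exists a (nonzero) continuous symmetric $k$-linear form $T:\mathcal H\times\cdots\times\mathcal H\to\mathbb K$ attaining its norm at $(\mathbf{x}_1,\ldots,\mathbf{x}_k)$ if and only if $$\dim\big(\operatorname{span}\{\mathbf{x}_1,\ldots,\mathbf{x}_k\}\big)=\begin{cases}1 & \text{if } \mathbb K=\mathbb C,\\ 1 \text{ or } 2 & \text{if } \mathbb K=\mathbb R.\end{cases}$$
   Context: For a continuous $k$-linear form $T$ on $\mathcal H$, $\|T\|=\sup\{|T(\mathbf{w}_1,\ldots,\mathbf{w}_k)|:\|\mathbf{w}_1\|,\ldots,\|\mathbf{w}_k\|\le 1\}$. A nonzero $T$ attains its norm at $(\mathbf{x}_1,\ldots,\mathbf{x}_k)$, where the $\mathbf{x}_i$ are norm one vectors, if $\|T\|=|T(\mathbf{x}_1,\ldots,\mathbf{x}_k)|$. In the complex case, multilinear forms are $\mathbb C$-multilinear. *)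

From HB Require Import structures.
From mathcomp Require Import all_boot all_order all_algebra all_fingroup.
From mathcomp Require Import reals complex.
Set Implicit Arguments. Unset Strict Implicit. Unset Printing Implicit Defensive.
Import Order.TTheory GRing.Theory Num.Theory.
Local Open Scope ring_scope.

Section Defs.
Variables (K : numFieldType) (cj : K -> K) (V : lmodType K).

(* ip is an inner product (linear in the first argument, cj-symmetric,
   positive definite), where cj is the conjugation of K (id when K = R). *)
Definition is_inner_product (ip : V -> V -> K) : Prop :=
  [/\ forall (a : K) (x y z : V), ip (a *: x + y) z = a * ip x z + ip y z,
      forall x y : V, ip x y = cj (ip y x),
      forall x : V, 0 <= ip x x
    & forall x : V, ip x x = 0 -> x = 0].

(* completeness for the induced norm ||x|| = sqrt (ip x x):
   ||d|| < e  is expressed as  ip d d < e ^+ 2  for e > 0. *)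
Definition ip_complete (ip : V -> V -> K) : Prop :=
  forall u : nat -> V,
    (forall e : K, 0 < e -> exists N : nat, forall m n : nat, (N <= m)%N -> (N <= n)%N ->
        ip (u m - u n) (u m - u n) < e ^+ 2) ->
    exists l : V, forall e : K, 0 < e -> exists N : nat, forall n : nat, (N <= n)%N ->
        ip (u n - l) (u n - l) < e ^+ 2.

Definition is_hilbert (ip : V -> V -> K) : Prop :=
  is_inner_product ip /\ ip_complete ip.

Variable k : nat.

Definition upd (w : 'I_k -> V) (i : 'I_k) (v : V) : 'I_k -> V :=
  fun j => if j == i then v else w j.

Definition multilinear (T : ('I_k -> V) -> K) : Prop :=
  forall (w : 'I_k -> V) (i : 'I_k) (a : K) (u v : V),
    T (upd w i (a *: u + v)) = a * T (upd w i u) + T (upd w i v).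

Definition symmetric_form (T : ('I_k -> V) -> K) : Prop :=
  forall (s : 'S_k) (w : 'I_k -> V), T (fun j => w (s j)) = T w.

Definition in_unit_ball (ip : V -> V -> K) (v : V) : Prop := ip v v <= 1.

(* continuity of a multilinear form: bounded on the product of unit balls
   (i.e. ||T|| < oo) *)
Definition continuous_form (ip : V -> V -> K) (T : ('I_k -> V) -> K) : Prop :=
  exists C : K, forall w : 'I_k -> V,
    (forall i, in_unit_ball ip (w i)) -> `|T w| <= C.

Definition attains_norm_at (ip : V -> V -> K) (T : ('I_k -> V) -> K)
    (x : 'I_k -> V) : Prop :=
  (exists w : 'I_k -> V, T w != 0) /\
  forall w : 'I_k -> V, (forall i, in_unit_ball ip (w i)) -> `|T w| <= `|T x|.

(* dim span {x_1, ..., x_k} = d : there is a linearly independent family of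
   d vectors with the same span as the x_i. *)
Definition in_span (m : nat) (y : 'I_m -> V) (v : V) : Prop :=
  exists c : 'I_m -> K, v = \sum_(j < m) c j *: y j.

Definition lin_indep (m : nat) (y : 'I_m -> V) : Prop :=
  forall c : 'I_m -> K, \sum_(j < m) c j *: y j = 0 -> forall j, c j = 0.

Definition span_dim (x : 'I_k -> V) (d : nat) : Prop :=
  exists y : 'I_d -> V,
    [/\ lin_indep y, forall j, in_span x (y j) & forall i, in_span y (x i)].

Definition norm_attainment_char (D : nat -> Prop) : Prop :=
  forall (ip : V -> V -> K), is_hilbert ip ->
  forall x : 'I_k -> V, (forall i, ip (x i) (x i) = 1) ->
    ((exists T : ('I_k -> V) -> K,
        [/\ multilinear T, symmetric_form T, continuous_form ip T
          & attains_norm_at ip T x])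
     <-> exists d, D d /\ span_dim x d).
End Defs.

From Pilot Require Import Defs.
From HB Require Import structures.
From mathcomp Require Import all_boot all_order all_algebra all_fingroup.
From mathcomp Require Import reals complex.
From mathcomp Require Import ring zify.
From Stdlib Require Import FunctionalExtensionality Classical.

Set Implicit Arguments.
Unset Strict Implicit.
Unset Printing Implicit Defensive.
Import Order.TTheory GRing.Theory Num.Theory.
Local Open Scope ring_scope.

(* Freezing all but three arguments of a symmetric k-linear form T at the point x where it
   attains its norm, and dividing by T x, gives a symmetric trilinear form B of norm one with
   B(a,b,c) = 1 for unit vectors a, b, c among the x_i.  A linear functional attaining its
   norm at a unit vector c is a multiple of <., c>; applied to B(a,b,.), and to
   B(a+tb, a+tb, .) for |t| = 1, this yields
     B(a,a,w) + t^2 B(b,b,w) = (<a,b> + t^2 <b,a>) <w,c>.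
   Over C, t = 1 and t = i give B(a,a,.) = <a,b> <.,c>, which forces a and c to be parallel:
   otherwise a, b, c are orthonormal and B(s,s,s) = 6 > 3^(3/2) = ||s||^3 for s = a + b + c.
   Over R, the same identity for B at (a+b)/||a+b|| and for -B at (a-b)/||a-b|| puts c in
   the span of a and b.  Conversely, if all x_i = l_i e lie on a line, the form
   prod_i conj(l_i) <w_i, e> attains its norm at x, and if they lie in a real plane with
   orthonormal basis e1, e2, so does Re prod_i conj(z_i) (<w_i,e1> + i <w_i,e2>), where
   z_i = <x_i,e1> + i <x_i,e2>. *)

Lemma le0_of_sqrD1_le (K : numDomainType) (p q : K) :
  0 <= p -> q <= 1 -> (1 + p) ^+ 2 <= 1 + p * q -> p <= 0.
Proof.
move=> p_ge0 q_le1 h.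
have : 1 + p + (p + p ^+ 2) <= 1 + p.
  rewrite (_ : 1 + p + _ = (1 + p) ^+ 2); last by ring.
  by apply: le_trans h _; rewrite lerD2l ler_piMr.
rewrite -{2}[1 + p]addr0 lerD2l => h'.
by apply: le_trans h'; rewrite lerDl exprn_ge0.
Qed.

Lemma sqr_norm_le0 (K : numDomainType) (y : K) : `|y| ^+ 2 <= 0 -> y = 0.
Proof.
move=> y_le0; apply/eqP; rewrite -normr_eq0 -sqrf_eq0 eq_le y_le0.
by rewrite exprn_ge0.
Qed.

Lemma sum_ord2 (M : nmodType) (F : 'I_2 -> M) :
  \sum_(q < 2) F q = F ord0 + F (lift ord0 ord0).
Proof. by rewrite !big_ord_recl big_ord0 addr0. Qed.

Lemma prod_upd (K : numFieldType) (V : lmodType K) (S : comNzRingType) k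
    (F : V -> S) (w : 'I_k -> V) i z :
  \prod_q F (upd w i z q) = F z * \prod_(q | q != i) F (w q).
Proof.
rewrite (bigD1 i) //= /upd eqxx; congr (_ * _).
by apply: eq_bigr => q /negbTE->.
Qed.

Lemma exists_ord_neq2 k (p q : 'I_k) :
  (3 <= k)%N -> exists l : 'I_k, (l != p) && (l != q).
Proof.
move=> k_ge3; have /card_gt0P[l l_out] : (0 < #|~: [set p; q]|)%N.
  by have := cardsC [set p; q]; rewrite card_ord cards2; case: (p != q) => /=; lia.
by exists l; move: l_out; rewrite !inE negb_or.
Qed.

Section InnerProduct.
Variables (K : numFieldType) (cj : {rmorphism K -> K}) (V : lmodType K).
(* cj is the identity over R and complex conjugation over C. *)
Hypothesis mul_conj : forall z : K, z * cj z = `|z| ^+ 2.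
Hypothesis sqrt_nonneg : forall r : K, 0 <= r -> exists2 s : K, 0 <= s & s ^+ 2 = r.

Lemma conj_ge0 (r : K) : 0 <= r -> cj r = r.
Proof.
rewrite le_eqVlt => /predU1P[<-|r_gt0]; first exact: rmorph0.
apply: (mulfI (lt0r_neq0 r_gt0)); rewrite mul_conj ger0_norm ?expr2 //.
exact: ltW.
Qed.

Lemma conjK : involutive cj.
Proof.
move=> z; have [->|z_neq0] := eqVneq z 0; first by rewrite !rmorph0.
have cz_neq0 : cj z != 0.
  apply: contraNneq z_neq0 => cz0.
  by rewrite -normr_eq0 -sqrf_eq0 -mul_conj cz0 mulr0.
apply: (mulfI cz_neq0); rewrite -rmorphM mul_conj (@conj_ge0 (`|z| ^+ 2)) ?exprn_ge0 //.
by rewrite -mul_conj mulrC.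
Qed.

Lemma norm_conj z : `|cj z| = `|z|.
Proof.
apply/eqP; rewrite -(@eqrXn2 _ 2) ?normr_ge0 //.
by rewrite -mul_conj conjK mulrC mul_conj.
Qed.

Definition lform (f : V -> K) : Prop :=
  forall a u v, f (a *: u + v) = a * f u + f v.

Section LinearForm.
Variables (f : V -> K) (f_lin : lform f).

Lemma lformD u v : f (u + v) = f u + f v.
Proof. by have := f_lin 1 u v; rewrite scale1r mul1r. Qed.

Lemma lform0 : f 0 = 0.
Proof. by apply: (addrI (f 0)); rewrite -lformD !addr0. Qed.

Lemma lformZ a u : f (a *: u) = a * f u.
Proof. by rewrite -[a *: u]addr0 f_lin lform0 addr0. Qed.

Lemma lformB u v : f (u - v) = f u - f v.
Proof. by rewrite lformD -scaleN1r lformZ mulN1r. Qed.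

End LinearForm.

Variable ip : V -> V -> K.
Hypothesis ip_inner : is_inner_product cj ip.

Lemma ip_lform z : lform (ip^~ z).
Proof. by move=> a u v; case: ip_inner. Qed.

Lemma ipC x y : ip x y = cj (ip y x). Proof. by case: ip_inner. Qed.
Lemma ip_ge0 x : 0 <= ip x x. Proof. by case: ip_inner. Qed.
Lemma ip_eq0 x : ip x x = 0 -> x = 0. Proof. by case: ip_inner => _ _ _; apply. Qed.

Lemma ipDl x y z : ip (x + y) z = ip x z + ip y z.
Proof. exact: (lformD (ip_lform z)). Qed.
Lemma ipZl a x z : ip (a *: x) z = a * ip x z.
Proof. exact: (lformZ (ip_lform z)). Qed.
Lemma ip0l z : ip 0 z = 0.
Proof. exact: (lform0 (ip_lform z)). Qed.
Lemma ipBl x y z : ip (x - y) z = ip x z - ip y z.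
Proof. exact: (lformB (ip_lform z)). Qed.
Lemma ipDr x y z : ip x (y + z) = ip x y + ip x z.
Proof. by rewrite ipC ipDl rmorphD -!ipC. Qed.
Lemma ipZr a x y : ip x (a *: y) = cj a * ip x y.
Proof. by rewrite ipC ipZl rmorphM -ipC. Qed.
Lemma ipBr x y z : ip x (y - z) = ip x y - ip x z.
Proof. by rewrite ipC ipBl rmorphB -!ipC. Qed.

Lemma unit_neq0 u : ip u u = 1 -> u != 0.
Proof.
by move=> u1; apply/eqP => u0; move: u1; rewrite u0 ip0l => /eqP; rewrite eq_sym oner_eq0.
Qed.

Lemma normalize u : u != 0 -> exists s e, [/\ 0 < s, ip e e = 1 & u = s *: e].
Proof.
move=> u_neq0; have [s s_ge0 s2] := sqrt_nonneg (ip_ge0 u).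
have s_neq0 : s != 0.
  by apply: contraNneq u_neq0 => s0; apply/eqP/ip_eq0; rewrite -s2 s0 expr2 mulr0.
exists s, (s^-1 *: u); split; first by rewrite lt_def s_neq0.
  by rewrite ipZl ipZr conj_ge0 ?invr_ge0 // -s2; field.
by rewrite scalerA mulfV ?scale1r.
Qed.

Lemma homogeneous_sqr_le (g : V -> K) (C : K) :
  (forall a u, g (a *: u) = a * g u) ->
  (forall u, ip u u <= 1 -> `|g u| ^+ 2 <= C) ->
  forall u, `|g u| ^+ 2 <= C * ip u u.
Proof.
move=> gZ g_le u; have [->|u_neq0] := eqVneq u 0.
  by rewrite -(scale0r (0 : V)) gZ ipZl !mul0r normr0 expr2 !mulr0.
have [s [e [s_gt0 e1 ->]]] := normalize u_neq0.
have s_ge0 := ltW s_gt0.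
rewrite gZ normrM exprMn ger0_norm // ipZl ipZr conj_ge0 // e1 mulr1 -expr2.
by rewrite mulrC ler_wpM2r ?exprn_ge0 // g_le ?e1.
Qed.

Lemma bessel_unit e u : ip e e = 1 -> `|ip u e| ^+ 2 <= ip u u.
Proof.
move=> e1; rewrite -mul_conj -subr_ge0.
have -> : ip u u - ip u e * cj (ip u e) = ip (u - ip u e *: e) (u - ip u e *: e).
  by rewrite ipBl !ipBr !ipZl !ipZr e1 (ipC e u); ring.
exact: ip_ge0.
Qed.

Lemma parseval2 e1 e2 al be : ip e1 e1 = 1 -> ip e2 e2 = 1 -> ip e1 e2 = 0 ->
  ip (al *: e1 + be *: e2) (al *: e1 + be *: e2) = `|al| ^+ 2 + `|be| ^+ 2.
Proof.
move=> e1_1 e2_1 e12; have e21 : ip e2 e1 = 0 by rewrite ipC e12 rmorph0.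
by rewrite ipDl !ipDr !ipZl !ipZr e1_1 e2_1 e12 e21 -!mul_conj; ring.
Qed.

Lemma bessel2 e1 e2 u : ip e1 e1 = 1 -> ip e2 e2 = 1 -> ip e1 e2 = 0 ->
  `|ip u e1| ^+ 2 + `|ip u e2| ^+ 2 <= ip u u.
Proof.
move=> e1_1 e2_1 e12; have e21 : ip e2 e1 = 0 by rewrite ipC e12 rmorph0.
rewrite -!mul_conj -subr_ge0.
have -> : ip u u - (ip u e1 * cj (ip u e1) + ip u e2 * cj (ip u e2)) =
    ip (u - ip u e1 *: e1 - ip u e2 *: e2) (u - ip u e1 *: e1 - ip u e2 *: e2).
  by rewrite !ipBl !ipBr !ipZl !ipZr e1_1 e2_1 e12 e21 (ipC e1 u) (ipC e2 u); ring.
exact: ip_ge0.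
Qed.

Lemma lform_norming_orth (f : V -> K) (M : K) (c v : V) :
  lform f -> (forall u, `|f u| ^+ 2 <= M ^+ 2 * ip u u) ->
  ip c c = 1 -> `|f c| = M -> ip v c = 0 -> f v = 0.
Proof.
move=> f_lin f_le c1 fcM vc.
have cv : ip c v = 0 by rewrite ipC vc rmorph0.
apply: sqr_norm_le0.
have [M0|M_neq0] := eqVneq M 0.
  by have := f_le v; rewrite M0 [0 ^+ 2]expr2 mulr0 mul0r.
have M_gt0 : 0 < M by rewrite lt_def M_neq0 -fcM normr_ge0.
pose Y := M ^+ 2 * ip v v; pose e := (Y + 1)^-1.
have Y_ge0 : 0 <= Y by rewrite mulr_ge0 ?exprn_ge0 ?ip_ge0 // ltW.
have e_gt0 : 0 < e by rewrite invr_gt0 ltr_wpDl.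
(* Moving c to c + t v gains 2 e |f v|^2 in |f|^2 to first order in e, while ||c + t v||^2
   only grows to second order. *)
pose t := e * f c * cj (f v).
have fct : f (c + t *: v) = f c * (1 + e * `|f v| ^+ 2).
  by rewrite lformD // lformZ // /t -mul_conj; ring.
have ipct : ip (c + t *: v) (c + t *: v) = 1 + e * `|f v| ^+ 2 * (e * Y).
  rewrite ipDl !ipDr !ipZl !ipZr c1 cv vc /t !rmorphM conjK conj_ge0 ?(ltW e_gt0) //.
  by rewrite /Y -fcM -!mul_conj; ring.
have := f_le (c + t *: v).
rewrite fct ipct normrM exprMn fcM ler_pM2l ?exprn_gt0 // ger0_norm; last first.
  by rewrite addr_ge0 ?mulr_ge0 ?exprn_ge0 ?normr_ge0 // ltW.
move=> h; rewrite -(pmulr_rle0 _ e_gt0); apply: le0_of_sqrD1_le h.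
  by rewrite mulr_ge0 ?exprn_ge0 ?normr_ge0 // ltW.
by rewrite mulrC ler_pdivrMr ?ltr_wpDl // mul1r lerDl ler01.
Qed.

Lemma lform_normingE (f : V -> K) (M : K) (c : V) :
  lform f -> (forall u, `|f u| ^+ 2 <= M ^+ 2 * ip u u) ->
  ip c c = 1 -> `|f c| = M -> forall u, f u = f c * ip u c.
Proof.
move=> f_lin f_le c1 fcM u.
have uc : ip (u - ip u c *: c) c = 0 by rewrite ipBl ipZl c1 mulr1 subrr.
rewrite -{1}(subrK (ip u c *: c) u) lformD // (lform_norming_orth f_lin f_le c1 fcM uc).
by rewrite add0r lformZ // mulrC.
Qed.

Lemma trilinear_sqr_le (B : V -> V -> V -> K) :
  (forall v w, lform (fun u => B u v w)) ->
  (forall u v w, B u v w = B v u w) -> (forall u v w, B u v w = B u w v) ->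
  (forall u v w, ip u u <= 1 -> ip v v <= 1 -> ip w w <= 1 -> `|B u v w| <= 1) ->
  forall u v w, `|B u v w| ^+ 2 <= ip u u * ip v v * ip w w.
Proof.
move=> B_lin B12 B23 B_le1.
have BZ1 a u v w : B (a *: u) v w = a * B u v w := lformZ (B_lin v w) a u.
have BZ2 a u v w : B u (a *: v) w = a * B u v w by rewrite B12 BZ1 B12.
have BZ3 a u v w : B u v (a *: w) = a * B u v w by rewrite B23 BZ2 B23.
have le1 u v w : ip v v <= 1 -> ip w w <= 1 -> `|B u v w| ^+ 2 <= ip u u.
  move=> v1 w1; rewrite -[ip u u]mul1r.
  apply: (homogeneous_sqr_le (g := fun u => B u v w)) => [a u'|u' u1]; first exact: BZ1.
  by rewrite exprn_ile1 ?B_le1.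
have le2 u v w : ip w w <= 1 -> `|B u v w| ^+ 2 <= ip u u * ip v v.
  move=> w1; apply: (homogeneous_sqr_le (g := fun v => B u v w)) => [a v'|v' v1].
    exact: BZ2.
  exact: le1.
move=> u v w; apply: (homogeneous_sqr_le (g := B u v)) => [a w'|w' w1].
  exact: BZ3.
exact: le2.
Qed.

Definition sym_trilinear_le1 (B : V -> V -> V -> K) : Prop :=
  [/\ forall v w, lform (fun u => B u v w),
      forall u v w, B u v w = B v u w,
      forall u v w, B u v w = B u w v
    & forall u v w, `|B u v w| ^+ 2 <= ip u u * ip v v * ip w w].

Definition norming_triple (B : V -> V -> V -> K) (a b c : V) : Prop :=
  [/\ ip a a = 1, ip b b = 1, ip c c = 1 & B a b c = 1].

Section SymTrilinear.
Variable B : V -> V -> V -> K.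
Hypothesis B_le1 : sym_trilinear_le1 B.

Lemma trilinC12 u v w : B u v w = B v u w. Proof. by case: B_le1. Qed.
Lemma trilinC23 u v w : B u v w = B u w v. Proof. by case: B_le1. Qed.
Lemma trilinC13 u v w : B u v w = B w v u.
Proof. by rewrite trilinC23 trilinC12 trilinC23. Qed.
Lemma trilin_sqr_le u v w : `|B u v w| ^+ 2 <= ip u u * ip v v * ip w w.
Proof. by case: B_le1. Qed.

Lemma trilin_lform1 v w : lform (fun u => B u v w). Proof. by case: B_le1. Qed.
Lemma trilin_lform2 u w : lform (fun v => B u v w).
Proof. by move=> a v v'; rewrite !(trilinC12 u); exact: trilin_lform1. Qed.
Lemma trilin_lform3 u v : lform (B u v).
Proof. by move=> a w w'; rewrite !(trilinC13 u v); exact: trilin_lform1. Qed.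

Lemma trilinD1 u u' v w : B (u + u') v w = B u v w + B u' v w.
Proof. exact: (lformD (trilin_lform1 v w)). Qed.
Lemma trilinZ1 a u v w : B (a *: u) v w = a * B u v w.
Proof. exact: (lformZ (trilin_lform1 v w)). Qed.
Lemma trilinD2 u v v' w : B u (v + v') w = B u v w + B u v' w.
Proof. exact: (lformD (trilin_lform2 u w)). Qed.
Lemma trilinZ2 a u v w : B u (a *: v) w = a * B u v w.
Proof. exact: (lformZ (trilin_lform2 u w)). Qed.
Lemma trilinD3 u v w w' : B u v (w + w') = B u v w + B u v w'.
Proof. exact: (lformD (trilin_lform3 u v)). Qed.

Lemma norming_triple12 a b c : norming_triple B a b c -> norming_triple B b a c.
Proof. by case=> a1 b1 c1 abc; split=> //; rewrite trilinC12. Qed.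
Lemma norming_triple23 a b c : norming_triple B a b c -> norming_triple B a c b.
Proof. by case=> a1 b1 c1 abc; split=> //; rewrite trilinC23. Qed.

Lemma norming_tripleE a b c : norming_triple B a b c -> forall w, B a b w = ip w c.
Proof.
case=> a1 b1 c1 abc w.
have Bab_le u : `|B a b u| ^+ 2 <= 1 ^+ 2 * ip u u.
  by have := trilin_sqr_le a b u; rewrite a1 b1 !mul1r expr1n mul1r.
have Babc_norm : `|B a b c| = 1 by rewrite abc normr1.
by rewrite (lform_normingE (trilin_lform3 a b) Bab_le c1 Babc_norm) abc mul1r.
Qed.

Lemma norming_triple_diag_at a b c t : norming_triple B a b c -> t * cj t = 1 ->
  B (a + t *: b) (a + t *: b) c = t * ip (a + t *: b) (a + t *: b).
Proof.
move=> abc tt; have [a1 b1 _ abc1] := abc.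
have Baac : B a a c = ip a b.
  by rewrite trilinC23 (norming_tripleE (norming_triple23 abc)).
have Bbbc : B b b c = ip b a.
  by rewrite trilinC23 (norming_tripleE (norming_triple23 (norming_triple12 abc))).
rewrite !trilinD1 !trilinD2 !trilinZ1 !trilinZ2 Baac Bbbc abc1 trilinC12 abc1.
rewrite ipDl !ipDr !ipZl !ipZr a1 b1; ring: tt.
Qed.

Lemma norming_triple_diag_unit a b c t s e : norming_triple B a b c -> t * cj t = 1 ->
  0 < s -> ip e e = 1 -> a + t *: b = s *: e -> B e e c = t.
Proof.
move=> abc tt s_gt0 e1 abE; have s_neq0 := lt0r_neq0 s_gt0.
have := norming_triple_diag_at abc tt.
rewrite abE trilinZ1 trilinZ2 ipZl ipZr conj_ge0 ?ltW // e1 mulr1 mulrA [t * _]mulrC.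
exact: (mulfI (mulf_neq0 s_neq0 s_neq0)).
Qed.

Lemma norming_triple_diag a b c t : norming_triple B a b c -> t * cj t = 1 ->
  forall w, B a a w + t ^+ 2 * B b b w = (ip a b + t ^+ 2 * ip b a) * ip w c.
Proof.
move=> abc tt w; have [a1 b1 c1 _] := abc.
have t_norm : `|t| = 1.
  by apply/eqP; rewrite -(@sqrp_eq1 _ `|t|) ?normr_ge0 // -mul_conj tt.
pose z := a + t *: b.
have Bzz_le u : `|B z z u| ^+ 2 <= ip z z ^+ 2 * ip u u.
  by rewrite expr2; exact: trilin_sqr_le.
have Bzzc_norm : `|B z z c| = ip z z.
  by rewrite (norming_triple_diag_at abc tt) normrM t_norm mul1r ger0_norm // ip_ge0.
have := lform_normingE (trilin_lform3 z z) Bzz_le c1 Bzzc_norm w.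
rewrite /z (norming_triple_diag_at abc tt) !trilinD1 !trilinD2 !trilinZ1 !trilinZ2.
rewrite (norming_tripleE abc) (norming_tripleE (norming_triple12 abc)).
rewrite ipDl !ipDr !ipZl !ipZr a1 b1 => h.
have -> : B a a w + t ^+ 2 * B b b w =
  B a a w + t * ip w c + (t * ip w c + t * (t * B b b w)) - (t + t) * ip w c by ring.
by rewrite h; ring: tt.
Qed.

Lemma norming_triple_imag_diag (j : K) : j ^+ 2 = -1 -> cj j = - j ->
  forall a b c, norming_triple B a b c -> forall w, B a a w = ip a b * ip w c.
Proof.
move=> j2 cjj a b c abc w.
have two_neq0 : 2 != 0 :> K by rewrite pnatr_eq0.
have unit_1 : 1 * cj 1 = 1 by rewrite rmorph1 mulr1.
have unit_j : j * cj j = 1 by rewrite cjj mulrN -expr2 j2 opprK.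
have := norming_triple_diag abc unit_1 w; have := norming_triple_diag abc unit_j w.
rewrite j2 expr1n !mul1r !mulN1r => eq_j eq_1; apply: (mulfI two_neq0).
have -> : 2 * B a a w = B a a w + B b b w + (B a a w - B b b w) by ring.
by rewrite eq_1 eq_j; ring.
Qed.

Lemma orthonormal_norming_triple_absurd a b c :
  norming_triple B a b c -> ip a b = 0 -> ip a c = 0 -> ip b c = 0 ->
  (forall w, B a a w = 0) -> (forall w, B b b w = 0) -> (forall w, B c c w = 0) ->
  False.
Proof.
move=> [a1 b1 c1 abc] ab ac bc Baa Bbb Bcc.
have [ba ca cb] : [/\ ip b a = 0, ip c a = 0 & ip c b = 0].
  by rewrite ipC ab (ipC c a) ac (ipC c b) bc !rmorph0.
pose s := a + b + c.
have ss : ip s s = 3%:R.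
  by rewrite /s !ipDl !ipDr a1 b1 c1 ab ac bc ba ca cb; ring.
have Bss w : B s s w = (B a b w + B a c w + B b c w) *+ 2.
  rewrite /s !trilinD1 !trilinD2 !Baa !Bbb !Bcc.
  by rewrite (trilinC12 b a) (trilinC12 c a) (trilinC12 c b); ring.
have sss : B s s s = 6%:R.
  rewrite Bss /s !trilinD3 (trilinC23 a b a) (trilinC13 a b b) (trilinC23 a c a).
  rewrite (trilinC13 a c c) (trilinC23 b c b) (trilinC13 b c c) (trilinC13 b c a).
  by rewrite (trilinC23 a c b) !Baa !Bbb !Bcc abc; ring.
have := trilin_sqr_le s s s.
by rewrite sss ss normr_nat -!natrX -!natrM ler_nat.
Qed.

Lemma norming_triple_parallel (j : K) : j ^+ 2 = -1 -> cj j = - j ->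
  forall a b c, norming_triple B a b c -> a = ip a c *: c.
Proof.
move=> j2 cjj a b c abc; have [a1 b1 c1 _] := abc.
have diag := norming_triple_imag_diag j2 cjj.
have bac := norming_triple12 abc; have acb := norming_triple23 abc.
have bca := norming_triple23 bac; have cab := norming_triple23 (norming_triple12 bca).
have E1 w : ip b a * ip w c = ip b c * ip w a by rewrite -(diag _ _ _ bac) (diag _ _ _ bca).
have E2 w : ip a b * ip w c = ip a c * ip w b by rewrite -(diag _ _ _ abc) (diag _ _ _ acb).
have [ac1|ac_not1] := eqVneq (ip a c * cj (ip a c)) 1.
  apply/eqP; rewrite -subr_eq0; apply/eqP/ip_eq0.
  by rewrite ipBl !ipBr !ipZl !ipZr a1 c1 (ipC c a); ring: ac1.
exfalso.
have ba : ip b a = 0.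
  have := E1 a; have := E1 c; rewrite a1 c1 !mulr1 => E1c E1a.
  have : ip b a * (1 - ip a c * cj (ip a c)) = 0.
    by rewrite mulrBr mulr1 -(ipC c a) mulrA E1a -E1c subrr.
  by move/eqP; rewrite mulf_eq0 subr_eq0 (eq_sym 1) (negbTE ac_not1) orbF => /eqP.
have ab : ip a b = 0 by rewrite ipC ba rmorph0.
have bc : ip b c = 0 by have := E1 a; rewrite ba a1 mul0r mulr1.
have ac : ip a c = 0 by have := E2 b; rewrite ab b1 mul0r mulr1.
apply: (orthonormal_norming_triple_absurd abc ab ac bc) => w.
- by rewrite (diag _ _ _ abc) ab mul0r.
- by rewrite (diag _ _ _ bac) ba mul0r.
- by rewrite (diag _ _ _ cab) (ipC c a) ac rmorph0 mul0r.
Qed.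

End SymTrilinear.

Lemma sym_trilinear_le1N B :
  sym_trilinear_le1 B -> sym_trilinear_le1 (fun u v w => - B u v w).
Proof.
case=> B_lin B12 B23 B_le; split=> [v w a u u'|u v w|u v w|u v w] /=.
- by rewrite (B_lin v w a u u') mulrN opprD.
- by rewrite B12.
- by rewrite B23.
- by rewrite normrN.
Qed.

Lemma norming_triple_real_span (cj_id : cj =1 id) B a b c :
  sym_trilinear_le1 B -> norming_triple B a b c -> a + b != 0 -> a - b != 0 ->
  exists al be, c = al *: a + be *: b.
Proof.
move=> B_le1 abc apb_neq0 amb_neq0; have [a1 b1 c1 _] := abc.
have NB_le1 := sym_trilinear_le1N B_le1.
have [s1 [p [s1_gt0 p1 apbE]]] := normalize apb_neq0.
have [s2 [m [s2_gt0 m1 ambE]]] := normalize amb_neq0.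
have s1_neq0 := lt0r_neq0 s1_gt0; have s2_neq0 := lt0r_neq0 s2_gt0.
have unit_1 : 1 * cj 1 = 1 by rewrite rmorph1 mulr1.
have unit_N1 : -1 * cj (-1) = 1 by rewrite rmorphN1 mulrNN mulr1.
have ppc : norming_triple B p p c.
  by split=> //; apply: (norming_triple_diag_unit B_le1 abc unit_1 s1_gt0 p1); rewrite scale1r.
have mmc : norming_triple (fun u v w => - B u v w) m m c.
  split=> //=; rewrite (norming_triple_diag_unit B_le1 abc unit_N1 s2_gt0 m1) ?opprK //.
  by rewrite scaleN1r.
have two_neq0 : 2 != 0 :> K by rewrite pnatr_eq0.
have key w : ip w c = ip c p * ip w p + ip c m * ip w m.
  have := norming_triple_diag B_le1 (norming_triple23 B_le1 ppc) unit_1 w.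
  have := norming_triple_diag NB_le1 (norming_triple23 NB_le1 mmc) unit_1 w.
  rewrite /= expr1n !mul1r (norming_tripleE B_le1 ppc) (norming_tripleE NB_le1 mmc).
  rewrite (ipC p c) (ipC m c) !cj_id => em ep; apply: (mulfI two_neq0).
  have -> : 2 * ip w c = ip w c + B c c w + (ip w c + - B c c w) by ring.
  by rewrite ep em; ring.
have pE : p = s1^-1 *: (a + b) by rewrite apbE scalerA mulVf ?scale1r.
have mE : m = s2^-1 *: (a - b) by rewrite ambE scalerA mulVf ?scale1r.
suff [l [mu ->]] : exists l mu, c = l *: p + mu *: m.
  exists (l / s1 + mu / s2), (l / s1 - mu / s2).
  by rewrite pE mE !scalerA scalerDr scalerBr scalerDl scalerBl addrACA.
exists (ip c p), (ip c m).
apply/eqP; rewrite -subr_eq0 opprD addrA; apply/eqP/ip_eq0.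
set d := c - _ - _.
by rewrite {2}/d !ipBr !ipZr !cj_id (key d); ring.
Qed.

Section Multilinear.
Variable k : nat.
Implicit Type T : ('I_k -> V) -> K.

Lemma upd_id (w : 'I_k -> V) i : upd w i (w i) = w.
Proof. by apply: functional_extensionality => q; rewrite /upd; case: eqP => // ->. Qed.

Lemma multilinear_eq0 T : multilinear T ->
  (forall w, (forall q, ip (w q) (w q) <= 1) -> T w = 0) -> forall w, T w = 0.
Proof.
move=> T_lin T_ball.
suff T0 n w : (forall q : 'I_k, (n <= q)%N -> ip (w q) (w q) <= 1) -> T w = 0.
  by move=> w; apply: (T0 k) => q; rewrite leqNgt ltn_ord.
elim: n w => [|n IHn] w w_le; first by apply: T_ball => q; apply: w_le.
have [n_lt_k|k_le_n] := ltnP n k; last first.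
  by apply: IHn => q; rewrite leqNgt (leq_trans (ltn_ord q) k_le_n).
pose qn := Ordinal n_lt_k.
have T_upd0 u : ip u u <= 1 -> T (upd w qn u) = 0.
  move=> u1; apply: IHn => q; rewrite /upd; case: eqP => // /eqP q_neq_n n_le_q.
  apply: w_le; rewrite ltn_neqAle n_le_q andbT; apply: contra q_neq_n => /eqP nq.
  by apply/eqP/val_inj; rewrite /= nq.
apply: sqr_norm_le0; rewrite -(upd_id w qn) -(mul0r (ip (w qn) (w qn))).
apply: (homogeneous_sqr_le (g := fun u => T (upd w qn u))) => [a u|u u1].
  exact: (lformZ (T_lin w qn)).
by rewrite T_upd0 // normr0 expr2 mulr0.
Qed.

Section Plug3.
Variables (x : 'I_k -> V) (i j l : 'I_k).

Definition plug3 (u v w : V) : 'I_k -> V :=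
  fun q => if q == i then u else if q == j then v else if q == l then w else x q.

Lemma plug3_id : plug3 (x i) (x j) (x l) = x.
Proof.
apply: functional_extensionality => q; rewrite /plug3.
by case: eqP => [->|_] //; case: eqP => [->|_] //; case: eqP => [->|_].
Qed.

Lemma upd_plug3 u v w u' : upd (plug3 u v w) i u' = plug3 u' v w.
Proof. by apply: functional_extensionality => q; rewrite /upd /plug3; case: eqP. Qed.

Lemma plug3_in_ball u v w : (forall q, ip (x q) (x q) = 1) ->
  ip u u <= 1 -> ip v v <= 1 -> ip w w <= 1 -> forall q, in_unit_ball ip (plug3 u v w q).
Proof.
move=> x1 u1 v1 w1 q; rewrite /in_unit_ball /plug3.
by do 3!case: eqP => // _; rewrite x1.
Qed.

Hypotheses (ij : i != j) (il : i != l) (jl : j != l).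

Lemma plug3_tperm12 u v w : (fun q => plug3 u v w (tperm i j q)) = plug3 v u w.
Proof.
have ji : j != i by rewrite eq_sym.
apply: functional_extensionality => q; rewrite /plug3.
by case: tpermP => [->|->|/eqP/negbTE-> /eqP/negbTE->]; rewrite ?eqxx ?(negbTE ji).
Qed.

Lemma plug3_tperm23 u v w : (fun q => plug3 u v w (tperm j l q)) = plug3 u w v.
Proof.
have ji : j != i by rewrite eq_sym.
have [li lj] : l != i /\ l != j by rewrite !(eq_sym l).
apply: functional_extensionality => q; rewrite /plug3.
case: tpermP => [->|->|/eqP/negbTE-> /eqP/negbTE->] //.
  by rewrite (negbTE li) (negbTE lj) (negbTE ji) !eqxx.
by rewrite (negbTE li) (negbTE lj) (negbTE ji) !eqxx.
Qed.

Lemma attains_norm_norming_triple T : multilinear T -> Defs.symmetric_form T ->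
  attains_norm_at ip T x -> (forall q, ip (x q) (x q) = 1) ->
  exists B, sym_trilinear_le1 B /\ norming_triple B (x i) (x j) (x l).
Proof.
move=> T_lin T_sym [[w0 Tw0_neq0] T_le] x1.
have Tx_neq0 : T x != 0.
  apply: contra_neq Tw0_neq0 => Tx0; apply: (multilinear_eq0 T_lin) => w w_le.
  by apply/eqP; have := T_le w w_le; rewrite Tx0 normr0 normr_le0.
pose B u v w := T (plug3 u v w) / T x.
have B_lin v w : lform (fun u => B u v w).
  move=> a u u'; rewrite /B -(upd_plug3 u v w (a *: u + u')) T_lin !upd_plug3.
  by rewrite mulrDl mulrA.
have B12 u v w : B u v w = B v u w.
  by rewrite /B -(T_sym (tperm i j) (plug3 u v w)) plug3_tperm12.
have B23 u v w : B u v w = B u w v.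
  by rewrite /B -(T_sym (tperm j l) (plug3 u v w)) plug3_tperm23.
exists B; split; last by split; rewrite ?x1 // /B plug3_id mulfV.
split=> //; apply: trilinear_sqr_le => // u v w u1 v1 w1.
rewrite /B normrM normfV ler_pdivrMr ?normr_gt0 // mul1r.
exact/T_le/plug3_in_ball.
Qed.

End Plug3.
End Multilinear.

Section Spans.
Variables (k : nat) (x : 'I_k -> V).

Lemma in_span_self i0 : in_span x (x i0).
Proof.
exists (fun q => (q == i0)%:R); rewrite (bigD1 i0) //= eqxx scale1r big1 ?addr0 //.
by move=> q /negbTE->; rewrite scale0r.
Qed.

Lemma span_dim1_of_parallel i0 : x i0 != 0 ->
  (forall q, exists al, x q = al *: x i0) -> span_dim x 1.
Proof.
move=> x0_neq0 x_par; exists (fun _ => x i0); split.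
- move=> c; rewrite big_ord1 => /eqP; rewrite scaler_eq0 (negbTE x0_neq0) orbF.
  by move=> /eqP c0 q; rewrite ord1.
- by move=> _; apply: in_span_self.
- by move=> q; have [al ->] := x_par q; exists (fun _ => al); rewrite big_ord1.
Qed.

Lemma span_dim2_of_plane i0 j0 : x i0 != 0 -> (forall al, x j0 != al *: x i0) ->
  (forall q, exists al be, x q = al *: x i0 + be *: x j0) -> span_dim x 2.
Proof.
move=> x0_neq0 x_np x_plane.
exists (fun q : 'I_2 => if q == ord0 then x i0 else x j0); split.
- move=> c; rewrite sum_ord2 /= => c_eq0.
  have c1_0 : c (lift ord0 ord0) = 0.
    apply/eqP; apply: contraNT (x_np (- (c ord0 / c (lift ord0 ord0)))) => c1_neq0.
    apply/eqP/(scalerI c1_neq0); rewrite scalerA mulrN mulrCA mulfV // mulr1 scaleNr.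
    by apply/eqP; rewrite -addr_eq0 addrC c_eq0.
  move: c_eq0; rewrite c1_0 scale0r addr0 => /eqP.
  rewrite scaler_eq0 (negbTE x0_neq0) orbF => /eqP c0_0 q.
  by case: (unliftP ord0 q) => [q' ->|->] //; rewrite ord1.
- by move=> q; case: (q == ord0); apply: in_span_self.
- move=> q; have [al [be ->]] := x_plane q.
  by exists (fun q : 'I_2 => if q == ord0 then al else be); rewrite sum_ord2.
Qed.

Lemma span_dim1_unit : span_dim x 1 ->
  exists e, ip e e = 1 /\ forall q, x q = ip (x q) e *: e.
Proof.
case=> y [y_indep _ x_span].
have y0_neq0 : y ord0 != 0.
  apply/eqP => y0; have := y_indep (fun _ => 1); rewrite big_ord1 y0 scaler0.
  by move=> /(_ erefl ord0) /eqP; rewrite oner_eq0.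
have [s [e [_ e1 yE]]] := normalize y0_neq0.
exists e; split=> // q; have [c ->] := x_span q.
by rewrite big_ord1 yE scalerA ipZl e1 mulr1.
Qed.

Lemma span_dim2_orthonormal : span_dim x 2 -> exists e1 e2,
  [/\ ip e1 e1 = 1, ip e2 e2 = 1, ip e1 e2 = 0
    & forall q, x q = ip (x q) e1 *: e1 + ip (x q) e2 *: e2].
Proof.
case=> y [y_indep _ x_span].
pose y0 := y ord0; pose y1 := y (lift ord0 ord0).
have y_indep2 c0 c1 : c0 *: y0 + c1 *: y1 = 0 -> c0 = 0 /\ c1 = 0.
  move=> c_eq0; have := y_indep (fun q => if q == ord0 then c0 else c1).
  rewrite sum_ord2 => /(_ c_eq0) c0_0.
  by split; [exact: (c0_0 ord0) | exact: (c0_0 (lift ord0 ord0))].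
have y0_neq0 : y0 != 0.
  apply/eqP => y0_0; have [] := y_indep2 1 0; first by rewrite y0_0 scaler0 scale0r addr0.
  by move/eqP; rewrite oner_eq0.
have [s1 [e1 [s1_gt0 e1_1 y0E]]] := normalize y0_neq0.
pose mu := ip y1 e1.
have r_neq0 : y1 - mu *: e1 != 0.
  apply/eqP => r0; have [_ N1_0] : mu / s1 = 0 /\ -1 = 0 :> K.
    by apply: y_indep2; rewrite y0E scalerA mulfVK ?lt0r_neq0 // scaleN1r -opprB r0 oppr0.
  by move/eqP: N1_0; rewrite oppr_eq0 oner_eq0.
have [s2 [e2 [s2_gt0 e2_1 rE]]] := normalize r_neq0.
have e21 : ip e2 e1 = 0.
  apply: (mulfI (lt0r_neq0 s2_gt0)); rewrite mulr0 -ipZl -rE.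
  by rewrite ipBl ipZl e1_1 mulr1 subrr.
have e12 : ip e1 e2 = 0 by rewrite ipC e21 rmorph0.
exists e1, e2; split=> // q; have [c ->] := x_span q.
suff [al [be ->]] : exists al be, \sum_(i < 2) c i *: y i = al *: e1 + be *: e2.
  by rewrite !ipDl !ipZl e1_1 e2_1 e12 e21 !mulr0 !mulr1 addr0 add0r.
have y1E : y1 = s2 *: e2 + mu *: e1 by rewrite -rE subrK.
exists (c ord0 * s1 + c (lift ord0 ord0) * mu), (c (lift ord0 ord0) * s2).
rewrite sum_ord2 -/y0 -/y1 y0E y1E scalerDr !scalerA scalerDl.
by rewrite addrAC addrA.
Qed.

Lemma attains_norm_line e : ip e e = 1 -> (forall q, ip (x q) (x q) = 1) ->
  (forall q, x q = ip (x q) e *: e) ->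
  exists T, [/\ multilinear T, Defs.symmetric_form T, continuous_form ip T
              & attains_norm_at ip T x].
Proof.
move=> e1 x1 xE.
have x_unimodular q : ip (x q) e * cj (ip (x q) e) = 1.
  by rewrite -(x1 q) {3 4}(xE q) ipZl ipZr e1 mulr1.
pose z := \prod_q cj (ip (x q) e).
pose T (w : 'I_k -> V) := z * \prod_q ip (w q) e.
have z_norm : `|z| = 1.
  rewrite normr_prod big1 // => q _; rewrite norm_conj; apply/eqP.
  by rewrite -(@sqrp_eq1 _ `|_|) ?normr_ge0 // -mul_conj x_unimodular.
have T_le1 w : (forall q, in_unit_ball ip (w q)) -> `|T w| <= 1.
  move=> w_le; rewrite normrM z_norm mul1r normr_prod.
  apply: prodr_ile1 => q _.
  rewrite normr_ge0 /= -(expr_le1 (isT : (0 < 2)%N)) ?normr_ge0 //.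
  exact: le_trans (bessel_unit _ e1) (w_le q).
have Tx : T x = 1.
  by rewrite /T /z -big_split /= big1 // => q _; rewrite mulrC x_unimodular.
exists T; split.
- by move=> w i a u v; rewrite /T !(prod_upd (fun t => ip t e)) ipDl ipZl; ring.
- by move=> s w; rewrite /T [in RHS](reindex_inj (@perm_inj _ s)).
- by exists 1.
- by split=> [|w w_le]; [exists x; rewrite Tx oner_eq0 | rewrite Tx normr1 T_le1].
Qed.

Lemma attains_norm_span_real (cj_id : cj =1 id) T (i0 : 'I_k) :
  multilinear T -> Defs.symmetric_form T -> attains_norm_at ip T x ->
  (forall q, ip (x q) (x q) = 1) -> span_dim x 1 \/ span_dim x 2.
Proof.
move=> T_lin T_sym T_att x1; have x0_neq0 := unit_neq0 (x1 i0).
have [x_par|/not_all_ex_not[j0 x_np]] := classic (forall q, exists al, x q = al *: x i0).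
  by left; apply: span_dim1_of_parallel x0_neq0 x_par.
have {}x_np al : x j0 != al *: x i0 by apply/eqP => x_par; apply: x_np; exists al.
have i0j0 : i0 != j0 by apply: contraNneq (x_np 1) => <-; rewrite scale1r.
right; apply: (span_dim2_of_plane x0_neq0 x_np) => q.
have [->|q_neq_i0] := eqVneq q i0; first by exists 1, 0; rewrite scale1r scale0r addr0.
have [->|q_neq_j0] := eqVneq q j0; first by exists 0, 1; rewrite scale1r scale0r add0r.
have [i0q j0q] : i0 != q /\ j0 != q by rewrite !(eq_sym _ q).
have [B [B_le1 abc]] := attains_norm_norming_triple i0j0 i0q j0q T_lin T_sym T_att x1.
apply: (norming_triple_real_span cj_id B_le1 abc).
  by apply: contraNneq (x_np (-1)) => /eqP; rewrite scaleN1r addrC addr_eq0.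
by apply: contraNneq (x_np 1) => /eqP; rewrite scale1r subr_eq0 eq_sym.
Qed.

Lemma attains_norm_span_imag (j : K) (k_ge3 : (3 <= k)%N) T (i0 : 'I_k) :
  j ^+ 2 = -1 -> cj j = - j ->
  multilinear T -> Defs.symmetric_form T -> attains_norm_at ip T x ->
  (forall q, ip (x q) (x q) = 1) -> span_dim x 1.
Proof.
move=> j2 cjj T_lin T_sym T_att x1.
apply: (span_dim1_of_parallel (unit_neq0 (x1 i0))) => q.
have [->|q_neq_i0] := eqVneq q i0; first by exists 1; rewrite scale1r.
have [l /andP[l_neq_q l_neq_i0]] := exists_ord_neq2 q i0 k_ge3.
have ql : q != l by rewrite eq_sym.
have [B [B_le1 abc]] :=
  attains_norm_norming_triple ql q_neq_i0 l_neq_i0 T_lin T_sym T_att x1.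
by exists (ip (x q) (x i0)); exact: (norming_triple_parallel B_le1 j2 cjj abc).
Qed.

End Spans.

End InnerProduct.

Lemma mul_conj_real (R : rcfType) (z : R) :
  z * (idfun : {rmorphism R -> R}) z = `|z| ^+ 2.
Proof. by rewrite /= -expr2 real_normK ?num_real. Qed.

Lemma sqrt_real (R : rcfType) (r : R) : 0 <= r -> exists2 s : R, 0 <= s & s ^+ 2 = r.
Proof. by move=> r_ge0; exists (Num.sqrt r); rewrite ?sqrtr_ge0 ?sqr_sqrtr. Qed.

Lemma mul_conj_complex (R : rcfType) (z : R[i]) : z * Num.conj z = `|z| ^+ 2.
Proof. by rewrite normCK. Qed.

Lemma sqrt_complex (R : rcfType) (r : R[i]) :
  0 <= r -> exists2 s : R[i], 0 <= s & s ^+ 2 = r.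
Proof. by move=> r_ge0; exists (sqrtC r); rewrite ?sqrtC_ge0 ?sqrtCK. Qed.

Lemma Re_scale_add (R : rcfType) (a : R) (z z' : R[i]) :
  complex.Re (a%:C * z + z')%C = a * complex.Re z + complex.Re z'.
Proof. by case: z z' => p q [p' q'] /=; rewrite mul0r subr0. Qed.

Section Plane.
Variables (R : rcfType) (V : lmodType R) (ip : V -> V -> R).
Hypothesis ip_inner : is_inner_product (idfun : {rmorphism R -> R}) ip.
Variables (k : nat) (x : 'I_k -> V) (e1 e2 : V).
Hypotheses (e1_1 : ip e1 e1 = 1) (e2_1 : ip e2 e2 = 1) (e12 : ip e1 e2 = 0).
Hypothesis x1 : forall q, ip (x q) (x q) = 1.
Hypothesis xE : forall q, x q = ip (x q) e1 *: e1 + ip (x q) e2 *: e2.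

Local Open Scope complex_scope.

Lemma attains_norm_plane :
  exists T, [/\ multilinear T, Defs.symmetric_form T, continuous_form ip T
              & attains_norm_at ip T x].
Proof.
pose phi u : R[i] := ip u e1 +i* ip u e2.
have phi_lin a u v : phi (a *: u + v) = a%:C * phi u + phi v.
  by rewrite /phi !(ipDl ip_inner) !(ipZl ip_inner); simpc.
have phi_norm u : `|phi u| ^+ 2 = (`|ip u e1| ^+ 2 + `|ip u e2| ^+ 2)%:C.
  by rewrite -add_Re2_Im2 /= !real_normK ?num_real.
have phi_x q : `|phi (x q)| = 1.
  apply/eqP; rewrite -(@sqrp_eq1 _ `|_|) ?normr_ge0 // phi_norm.
  by have := x1 q; rewrite {1 2}(xE q) (parseval2 (mul_conj_real (R := R)) ip_inner) // => ->.
pose z := \prod_q Num.conj (phi (x q)).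
pose T (w : 'I_k -> V) := complex.Re (z * \prod_q phi (w q)).
have T_le1 w : (forall q, in_unit_ball ip (w q)) -> `|T w| <= 1.
  move=> w_le; rewrite -lecR; apply: le_trans (normc_ge_Re _) _.
  rewrite normrM normr_prod big1 => [|q _]; last by rewrite norm_conjC phi_x.
  rewrite mul1r normr_prod; apply: prodr_ile1 => q _; rewrite normr_ge0 /=.
  rewrite -(expr_le1 (isT : (0 < 2)%N)) ?normr_ge0 // phi_norm -[1]/(1%:C) lecR.
  exact: le_trans (bessel2 (mul_conj_real (R := R)) ip_inner _ e1_1 e2_1 e12) (w_le q).
have Tx : T x = 1.
  by rewrite /T /z -big_split /= big1 // => q _; rewrite mulrC -normCK phi_x expr1n.
exists T; split.
- move=> w i a u v; rewrite /T !(prod_upd phi) phi_lin -Re_scale_add; congr complex.Re.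
  by ring.
- by move=> s w; rewrite /T [in RHS](reindex_inj (@perm_inj _ s)).
- by exists 1.
- by split=> [|w w_le]; [exists x; rewrite Tx oner_eq0 | rewrite Tx normr1 T_le1].
Qed.

End Plane.

Theorem theorem1p1 (R : realType) (k : nat) (hk : (3 <= k)%N) :
  (forall V : lmodType R,
     norm_attainment_char (fun r : R => r) V k (fun d => d = 1%N \/ d = 2%N))
  /\
  (forall V : lmodType R[i],
     norm_attainment_char (@Num.conj R[i]) V k (fun d => d = 1%N)).
Proof.
pose i0 : 'I_k := Ordinal (leq_trans (isT : (0 < 3)%N) hk).
have [mcR sqR] := (@mul_conj_real R, @sqrt_real R).
have [mcC sqC] := (@mul_conj_complex R, @sqrt_complex R).
split=> V ip [ip_inner _] x x1; split.
- case=> T [T_lin T_sym _ T_att].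
  have [] := attains_norm_span_real mcR sqR ip_inner (fun _ => erefl) i0
    T_lin T_sym T_att x1.
    by exists 1%N; split; [left|].
  by exists 2%N; split; [right|].
- case=> d [[]-> x_span].
    have [e [e1 xE]] := span_dim1_unit mcR sqR ip_inner x_span.
    exact: (attains_norm_line mcR ip_inner e1 x1 xE).
  have [e1 [e2 [e1_1 e2_1 e12 xE]]] := span_dim2_orthonormal mcR sqR ip_inner x_span.
  exact: (attains_norm_plane ip_inner e1_1 e2_1 e12 x1 xE).
- case=> T [T_lin T_sym _ T_att]; exists 1%N; split=> //.
  exact: (attains_norm_span_imag mcC sqC ip_inner hk i0 (sqrCi _) (conjCi _)
    T_lin T_sym T_att x1).
- case=> d [-> x_span].
  have [e [e1 xE]] := span_dim1_unit mcC sqC ip_inner x_span.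
  exact: (attains_norm_line mcC ip_inner e1 x1 xE).
Qed.
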